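(* Let $A$ be a finite set and let $\rho\subseteq A^n$, $n\ge3$, be an essential key relation preserved by a near-unanimity operation. Then the pattern of $\rho$ is the trivial equivalence relation on $\{1,\dots,n\}$.
   Context: A near-unanimity operation is an $m$-ary operation $f$ on $A$ ($m\ge 3$) with $f(y,x,\dots,x)=f(x,y,x,\dots,x)=\dots=f(x,\dots,x,y)=x$ for all $x,y$; it preserves $\rho$ if applying it coordinatewise to any $m$ tuples of $\rho$ gives a tuple of $\rho$. A unary vector-function is a tuple $\Psi=(\psi_1,\dots,\psi_n)$ of maps $\psi_i:A\to A$ acting coordinatewise; it preserves $\rho$ if $\Psi(\rho)\subseteq\rho$. $\rho$ is a key relation if there is $\beta\in A^n\setminus\rho$ (a key tuple) such that every $\alpha\in A^n\setminus\rho$ is mapped to $\beta$ by some unary vector-function preserving $\rho$. $\rho$ is essential if it cannot be written as a conjunction of relations of smaller arities. The pattern of $\rho$: for $i\ne j$, $i\overset{\rho}{\sim}j$ iff there do NOT exist $a_1,\dots,a_n,b_i,b_j\in A$ with $(a_1,\dots,a_n)\notin\rho$ while the tuples obtained by replacing $a_i$ by $b_i$, replacing $a_j$ by $b_j$, and replacing both, all lie in $\rho$; and $i\overset{\rho}{\sim}i$ always. *)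

From mathcomp Require Import all_boot.
Set Implicit Arguments. Unset Strict Implicit. Unset Printing Implicit Defensive.

(* An n-ary relation on A: a predicate on n-tuples, tuples being maps 'I_n -> A
   (coordinates indexed 0..n-1 instead of 1..n). *)
Definition relation (A : finType) (n : nat) := ('I_n -> A) -> Prop.

Definition near_unanimity (A : finType) (m : nat) (f : ('I_m -> A) -> A) : Prop :=
  3 <= m /\
  forall (x y : A) (i : 'I_m), f (fun j => if j == i then y else x) = x.

Definition preserves_op (A : finType) (n m : nat) (f : ('I_m -> A) -> A)
    (rho : relation A n) : Prop :=
  forall ts : 'I_m -> ('I_n -> A),
    (forall j, rho (ts j)) -> rho (fun i => f (fun j => ts j i)).

Definition apply_vf (A : finType) (n : nat) (Psi : 'I_n -> A -> A) (x : 'I_n -> A)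
  : 'I_n -> A := fun i => Psi i (x i).

Definition preserves_vf (A : finType) (n : nat) (Psi : 'I_n -> A -> A)
    (rho : relation A n) : Prop :=
  forall x, rho x -> rho (apply_vf Psi x).

Definition key_tuple (A : finType) (n : nat) (rho : relation A n) (beta : 'I_n -> A) : Prop :=
  ~ rho beta /\
  forall alpha, ~ rho alpha ->
    exists Psi : 'I_n -> A -> A, preserves_vf Psi rho /\ apply_vf Psi alpha = beta.

Definition key_relation (A : finType) (n : nat) (rho : relation A n) : Prop :=
  exists beta, key_tuple rho beta.

(* rho is a conjunction of finitely many relations sigma_j of arities m_j < n,
   each applied to some choice of the variables x_1..x_n (repetitions allowed). *)
Definition conj_smaller_arity (A : finType) (n : nat) (rho : relation A n) : Prop :=
  exists (k : nat) (m : 'I_k -> nat),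
    (forall j, m j < n) /\
    exists (sigma : forall j : 'I_k, ('I_(m j) -> A) -> Prop)
           (idx : forall j : 'I_k, 'I_(m j) -> 'I_n),
      forall x : 'I_n -> A,
        rho x <-> (forall j : 'I_k, sigma j (fun t => x (idx j t))).

Definition essential (A : finType) (n : nat) (rho : relation A n) : Prop :=
  ~ conj_smaller_arity rho.

Definition upd (A : finType) (n : nat) (a : 'I_n -> A) (i : 'I_n) (b : A) : 'I_n -> A :=
  fun k => if k == i then b else a k.

Definition pattern (A : finType) (n : nat) (rho : relation A n) (i j : 'I_n) : Prop :=
  i = j \/
  (i <> j /\
   ~ exists (a : 'I_n -> A) (bi bj : A),
       ~ rho a /\ rho (upd a i bi) /\ rho (upd a j bj) /\
       rho (upd (upd a i bi) j bj)).

(* If i ~ j for some i <> j, the slice of rho through any tuple in the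
   coordinates i, j is rectangular.  Essentiality yields b outside rho whose
   one-coordinate modifications b[i:=ci], b[j:=cj], b[k:=ck] (k a third
   coordinate) all lie in rho.  For every p, a near-unanimity operation f applied
   to m such tuples, arranged so that coordinate k is modified in row p only,
   produces tuples of the slice through b: (u p, v p) and (u (p+1), v p), where
   u p = f(ci,...,ci,bi,...,bi) with p copies of ci and
   v p = f(bj,...,bj,cj,...,cj) with p+1 copies of bj.  Rectangularity then
   propagates (u 0, v p) = (bi, v p) along p, and for p = m-1 this is b. *)

From mathcomp Require Import all_boot.
From mathcomp Require Import zify.
From Stdlib Require Import FunctionalExtensionality Classical.

Set Implicit Arguments. Unset Strict Implicit. Unset Printing Implicit Defensive.

Definition rectangular (T : Type) (R : T -> T -> Prop) : Prop :=
  forall u u' v v', R u v -> R u' v -> R u v' -> R u' v'.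

Lemma rectangular_zigzag (T : Type) (R : T -> T -> Prop) (u v : nat -> T) :
  rectangular R -> (forall p, R (u p) (v p)) -> (forall p, R (u p.+1) (v p)) ->
  forall p, R (u 0) (v p).
Proof.
move=> rectR Rpp RSpp; elim=> [|p IHp]; first exact: Rpp.
exact: rectR (RSpp p) IHp (Rpp p.+1).
Qed.

Lemma exists_third_ord (n : nat) (i j : 'I_n) :
  2 < n -> exists k : 'I_n, k != i /\ k != j.
Proof.
move=> n_gt2.
have : 0 < #|~: [set i; j]|.
  by have := cardsC [set i; j]; rewrite cards2 card_ord; lia.
by case/card_gt0P=> k; rewrite !inE negb_or => /andP[ki kj]; exists k.
Qed.

Section Update.
Variables (A : finType) (n : nat).
Implicit Types (a : 'I_n -> A) (i j q : 'I_n) (x y : A).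

Lemma upd_eq a i x : upd a i x i = x.
Proof. by rewrite /upd eqxx. Qed.

Lemma upd_neq a i x q : q != i -> upd a i x q = a q.
Proof. by rewrite /upd => /negbTE->. Qed.

Lemma upd_id a i : upd a i (a i) = a.
Proof. by apply: functional_extensionality => q; rewrite /upd; case: eqP => [->|]. Qed.

Lemma upd_upd a i x y : upd (upd a i x) i y = upd a i y.
Proof. by apply: functional_extensionality => q; rewrite /upd; case: eqP. Qed.

Lemma updC a i j x y : i != j -> upd (upd a i x) j y = upd (upd a j y) i x.
Proof.
move=> ij; apply: functional_extensionality => q; rewrite /upd.
by case: eqP => [->|//]; rewrite eq_sym (negbTE ij).
Qed.

End Update.

Definition slice (A : finType) (n : nat) (rho : relation A n) (a : 'I_n -> A)
    (i j : 'I_n) (u v : A) : Prop :=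
  rho (upd (upd a i u) j v).

Lemma pattern_rectangular (A : finType) (n : nat) (rho : relation A n) (i j : 'I_n) :
  i != j -> pattern rho i j -> forall a, rectangular (slice rho a i j).
Proof.
move=> ij [/eqP ij'|[_ no_rect]]; first by rewrite ij' in ij.
move=> a u u' v v' Ruv Ru'v Ruv'; apply: NNPP => Ru'v'; apply: no_rect.
exists (upd (upd a i u') j v'), u, v.
have -> : upd (upd (upd a i u') j v') i u = upd (upd a i u) j v'.
  by rewrite -updC // upd_upd.
by rewrite !(upd_upd (upd a i _)).
Qed.

(* Otherwise rho is the conjunction of its projections forgetting one coordinate. *)
Lemma essential_witness (A : finType) (n : nat) (rho : relation A n.+1) :
  essential rho -> exists b, ~ rho b /\ forall i, exists c, rho (upd b i c).
Proof.
move=> rho_ess; apply: NNPP => no_witness; apply: rho_ess.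
exists n.+1, (fun _ => n); split=> //.
exists (fun i y => exists x, rho x /\ forall t, x (lift i t) = y t), (fun i t => lift i t).
move=> x; split=> [rho_x i|proj_x]; first by exists x.
apply: NNPP => rho_x; apply: no_witness; exists x; split=> // i.
have [x' [rho_x' x'_lift]] := proj_x i; exists (x' i).
suff -> : upd x i (x' i) = x' by [].
apply: functional_extensionality => q.
case: (unliftP i q) => [t ->|->]; last by rewrite upd_eq.
by rewrite upd_neq ?x'_lift // eq_sym neq_lift.
Qed.

Section NearUnanimity.
Variables (A : finType) (n m : nat) (rho : relation A n) (f : ('I_m -> A) -> A).
Hypotheses (f_nu : near_unanimity f) (f_rho : preserves_op f rho).

Lemma nu_almost_const (p : nat) (c : 'I_m -> A) (x : A) :
  (forall l : 'I_m, val l != p -> c l = x) -> f c = x.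
Proof.
case: f_nu => m_ge3 nu_f c_x.
have [p0 c_x'] : exists p0 : 'I_m, forall l, l != p0 -> c l = x.
  case: (ltnP p m) => [p_lt|p_ge].
    exists (Ordinal p_lt) => l l_p; apply: c_x.
    by apply: contraNneq l_p => l_p; apply/eqP/val_inj.
  have m_gt0 : 0 < m by lia.
  by exists (Ordinal m_gt0) => l _; apply: c_x; rewrite neq_ltn (leq_trans (ltn_ord l)).
rewrite -(nu_f x (c p0) p0); congr f.
by apply: functional_extensionality => l; case: eqP => [->|/eqP/c_x'].
Qed.

Lemma preserves_slice (b : 'I_n -> A) (i j : 'I_n) (r : 'I_m -> 'I_n -> A) :
  (forall l, rho (r l)) ->
  (forall q, q != i -> q != j ->
     exists p : nat, forall l : 'I_m, val l != p -> r l q = b q) ->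
  slice rho b i j (f (fun l => r l i)) (f (fun l => r l j)).
Proof.
move=> rho_r r_b; have := f_rho rho_r; congr rho.
apply: functional_extensionality => q; rewrite /upd.
case: eqP => [->//|/eqP qj]; case: eqP => [->//|/eqP qi].
by have [p r_b_p] := r_b q qi qj; exact: nu_almost_const r_b_p.
Qed.

Lemma slice_not_rectangular (b : 'I_n -> A) (i j k : 'I_n) (ci cj ck : A) :
  i != j -> k != i -> k != j -> ~ rho b ->
  rho (upd b i ci) -> rho (upd b j cj) -> rho (upd b k ck) ->
  ~ rectangular (slice rho b i j).
Proof.
move=> ij ki kj b_rho rho_i rho_j rho_k rect.
have ji : j != i by rewrite eq_sym.
have ik : i != k by rewrite eq_sym.
have jk : j != k by rewrite eq_sym.
pose u p := f (fun l : 'I_m => if l < p then ci else b i).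
pose v p := f (fun l : 'I_m => if p < l then cj else b j).
have diag p : slice rho b i j (u p) (v p).
  pose r (l : 'I_m) := if l < p then upd b i ci
                       else if val l == p then upd b k ck else upd b j cj.
  have col_i : (fun l => r l i) = (fun l => if l < p then ci else b i).
    by apply: functional_extensionality => l; rewrite /r;
       case: ltngtP => _; rewrite ?upd_eq ?upd_neq.
  have col_j : (fun l => r l j) = (fun l => if p < l then cj else b j).
    by apply: functional_extensionality => l; rewrite /r;
       case: ltngtP => _; rewrite ?upd_eq ?upd_neq.
  rewrite /u /v -col_i -col_j; apply: preserves_slice.
    by move=> l; rewrite /r; case: ifP => _; [|case: ifP].
  move=> q qi qj; exists p => l /negbTE l_p; rewrite /r l_p.
  by case: ifP => _; rewrite upd_neq.
have step p : slice rho b i j (u p.+1) (v p).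
  pose r (l : 'I_m) := if l < p.+1 then upd b i ci else upd b j cj.
  have col_i : (fun l => r l i) = (fun l => if l < p.+1 then ci else b i).
    by apply: functional_extensionality => l; rewrite /r;
       case: ifP => _; rewrite ?upd_eq ?upd_neq.
  have col_j : (fun l => r l j) = (fun l => if p < l then cj else b j).
    by apply: functional_extensionality => l; rewrite /r ltnS;
       case: ltnP => _; rewrite ?upd_eq ?upd_neq.
  rewrite /u /v -col_i -col_j; apply: preserves_slice.
    by move=> l; rewrite /r; case: ifP.
  move=> q qi qj; exists 0 => l _; rewrite /r.
  by case: ifP => _; rewrite upd_neq.
have u0 : u 0 = b i by apply: (@nu_almost_const 0).
have v_last : v m.-1 = b j.
  apply: (@nu_almost_const m) => l _.
  by case: ltnP => // l_gt; have := ltn_ord l; lia.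
by have := rectangular_zigzag rect diag step m.-1; rewrite /slice u0 v_last !upd_id.
Qed.

End NearUnanimity.

Theorem mainTheorem7 (A : finType) (n : nat) (rho : relation A n) :
  3 <= n ->
  essential rho ->
  key_relation rho ->
  (exists (m : nat) (f : ('I_m -> A) -> A), near_unanimity f /\ preserves_op f rho) ->
  forall i j : 'I_n, pattern rho i j -> i = j.
Proof.
case: n rho => [//|n] rho n_ge3 rho_ess _ [m [f [f_nu f_rho]]] i j ij_pat.
apply/eqP; apply: contraT => ij.
have [b [b_rho b_upd]] := essential_witness rho_ess.
have [k [ki kj]] := exists_third_ord i j n_ge3.
have [ci rho_i] := b_upd i; have [cj rho_j] := b_upd j; have [ck rho_k] := b_upd k.
exfalso; apply: (slice_not_rectangular f_nu f_rho ij ki kj b_rho rho_i rho_j rho_k).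
exact: pattern_rectangular.
Qed.
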